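(* For an integer $k\ge 1$ let $\Gamma_k$ be the $k\times k$ grid graph (on $n=k^2$ vertices), and for an integer $n\ge 1$ let $S_n$ be the star on $n$ vertices (one center adjacent to $n-1$ leaves, no other edges). For $\rho>0$ let $\mathrm{HUDG}(\rho)$ be the class of graphs realizable as hyperbolic uniform disk graphs with radius $\rho$. Then: (i) $\Gamma_k\in\mathrm{HUDG}(1/n^3)$ for all $k$, where $n=k^2$; (ii) $S_n\notin\mathrm{HUDG}(1/n^3)$ for all $n\ge 8$; (iii) $\Gamma_k\notin\mathrm{HUDG}(\log n)$ for all $k\ge 5$, where $n=k^2$; (iv) $S_n\in\mathrm{HUDG}(\log n)$ for all $n$. Here $\log$ is the natural logarithm.
   Context: $\mathbb{H}^2$ denotes the hyperbolic plane of Gaussian curvature $-1$. A graph is a hyperbolic uniform disk graph with radius $\rho$ if it is isomorphic to the intersection graph of a finite family of closed hyperbolic disks of radius $\rho$ in $\mathbb{H}^2$, i.e., there are points (centers) assigned injectively to its vertices such that two vertices are adjacent iff their centers have hyperbolic distance at most $2\rho$. *)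

From Stdlib Require Import Reals Lra Lia.
Open Scope R_scope.

(* Model of H^2 (curvature -1): the Poincare upper half-plane. *)
Definition hpoint : Type := { p : R * R | 0 < snd p }.

Definition arcosh (u : R) : R := ln (u + sqrt (u * u - 1)).

Definition hdist (p q : hpoint) : R :=
  let '(x1, y1) := proj1_sig p in
  let '(x2, y2) := proj1_sig q in
  arcosh (1 + ((x1 - x2) ^ 2 + (y1 - y2) ^ 2) / (2 * y1 * y2)).

Definition HUDG (rho : R) (V : Type) (adj : V -> V -> Prop) : Prop :=
  exists f : V -> hpoint,
    (forall u v, f u = f v -> u = v) /\
    (forall u v, u <> v -> (adj u v <-> hdist (f u) (f v) <= 2 * rho)).

Definition grid_vertex (k : nat) : Type :=
  { p : nat * nat | (fst p < k)%nat /\ (snd p < k)%nat }.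

Definition grid_adj (k : nat) (u v : grid_vertex k) : Prop :=
  let '(a, b) := proj1_sig u in
  let '(c, d) := proj1_sig v in
  (a = c /\ (b = S d \/ d = S b)) \/ (b = d /\ (a = S c \/ c = S a)).

Definition star_vertex (n : nat) : Type := { i : nat | (i < n)%nat }.

Definition star_adj (n : nat) (u v : star_vertex n) : Prop :=
  proj1_sig u <> proj1_sig v /\ (proj1_sig u = 0%nat \/ proj1_sig v = 0%nat).

(* Everything is computed with [hcosh p q], the hyperbolic cosine of the distance,
   and around a centre [c] with the hyperbolic law of cosines
   [cosh d(p,q) = cosh a cosh b - sinh a sinh b cos g].

   (i) and (iv) are explicit placements in the upper half-plane: the grid on a square
   lattice of mesh [2 sinh rho] just above height [1], where adjacency reduces to
   squared lattice distance at most [1]; the star with its leaves on the line [y = 1]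
   at spacing [2 cosh rho] and its centre at height [cosh (2 rho)].

   (ii) When [cosh (2 rho) <= 11/9], two leaves that are close to the centre but not to
   each other subtend at the centre an angle with cosine below [11/20], and Delsarte's
   linear-programming bound allows at most six such directions in the plane.

   (iii) When [cosh (2 rho) >= 98] the 3 x 3 grid around a vertex cannot be placed.
   Seen from the centre, each of its four neighbours [n_i] shadows an arc of half-width
   [a_i] that contains the direction of every point adjacent to [n_i] but far from the
   centre.  Each corner lies in the shadows of two consecutive neighbours, while no
   neighbour lies in the shadow of another.  At most one neighbour is near the centre,
   so the [a_i] sum to less than [PI], and then four such arcs cannot close up around
   the circle. *)

From Stdlib Require Import Reals Lra Lia ZArith ProofIrrelevance.
Open Scope R_scope.

Lemma lt_of_sq_lt (a b : R) : 0 <= b -> a * a < b * b -> a < b.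
Proof. intros; nra. Qed.

Lemma div_le_iff (a b c : R) : 0 < c -> (a / c <= b <-> a <= b * c).
Proof.
  intros Hc; split; intro H.
  - apply (Rmult_le_compat_r c) in H; [|lra]. now replace (a / c * c) with a in H by (field; lra).
  - apply (Rmult_le_reg_r c); [assumption|]. now replace (a / c * c) with a by (field; lra).
Qed.

Lemma plus_inv_le_iff (x y : R) : 1 <= x -> 1 <= y -> (x <= y <-> x + / x <= y + / y).
Proof.
  intros Hx Hy.
  assert (Hd : (y + / y) - (x + / x) = (y - x) * (x * y - 1) / (x * y)) by (field; lra).
  assert (Hxy : 0 < x * y) by nra.
  split; intro H.
  - enough (0 <= (y - x) * (x * y - 1) / (x * y)) by lra.
    unfold Rdiv; apply Rmult_le_pos;
      [apply Rmult_le_pos; nra | apply Rlt_le, Rinv_0_lt_compat; nra].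
  - destruct (Rle_lt_dec x y) as [|Hlt]; [assumption|].
    enough ((y - x) * (x * y - 1) / (x * y) < 0) by lra.
    apply Rdiv_neg_pos; [|lra]. apply Rmult_neg_pos; nra.
Qed.

Lemma ln_le_iff (v r : R) : 0 < v -> (ln v <= r <-> v <= exp r).
Proof.
  intros Hv; split; intro H.
  - destruct (Rle_lt_dec v (exp r)) as [|Hlt]; [assumption|].
    apply ln_increasing in Hlt; [|apply exp_pos]. rewrite ln_exp in Hlt; lra.
  - destruct (Rle_lt_dec (ln v) r) as [|Hlt]; [assumption|].
    apply exp_increasing in Hlt. rewrite exp_ln in Hlt; lra.
Qed.

Lemma arcosh_le_iff (u r : R) : 1 <= u -> 0 <= r -> (arcosh u <= r <-> u <= cosh r).
Proof.
  intros Hu Hr; unfold arcosh, cosh.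
  set (v := u + sqrt (u * u - 1)).
  assert (Hs : sqrt (u * u - 1) * sqrt (u * u - 1) = u * u - 1) by (apply sqrt_sqrt; nra).
  pose proof (sqrt_pos (u * u - 1)).
  assert (Hv : 1 <= v) by (unfold v; lra).
  assert (Hu_v : u = (v + / v) / 2).
  { assert (/ v = u - sqrt (u * u - 1)) by (unfold v; field_simplify_eq; nra).
    unfold v at 1; lra. }
  assert (HE : 1 <= exp r) by (pose proof (exp_ineq1_le r); lra).
  rewrite ln_le_iff, Hu_v, exp_Ropp, (plus_inv_le_iff v (exp r)) by lra; lra.
Qed.

Lemma cosh_sq_sub_sinh_sq (x : R) : cosh x ^ 2 - sinh x ^ 2 = 1.
Proof.
  unfold cosh, sinh; rewrite exp_Ropp; pose proof (exp_pos x); field; lra.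
Qed.

Lemma cosh_2a_sinh (x : R) : cosh (2 * x) = 1 + 2 * sinh x ^ 2.
Proof.
  unfold cosh, sinh; rewrite !exp_Ropp; replace (2 * x) with (x + x) by ring.
  rewrite exp_plus; pose proof (exp_pos x); field; lra.
Qed.

Lemma sinh_pos (x : R) : 0 < x -> 0 < sinh x.
Proof. intros; rewrite <- sinh_0; apply sinh_lt; assumption. Qed.

Lemma cosh_2a_gt1 (x : R) : 0 < x -> 1 < cosh (2 * x).
Proof. intros Hx; rewrite cosh_2a_sinh; pose proof (sinh_pos x Hx); nra. Qed.

Lemma sinh_le_twice (x : R) : 0 <= x <= 1/2 -> sinh x <= 2 * x.
Proof.
  intros Hx; unfold sinh.
  pose proof (exp_ineq1_le (- x)); pose proof (exp_pos x).
  assert (exp x * exp (- x) = 1) by (rewrite <- exp_plus, Rplus_opp_r, exp_0; reflexivity).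
  assert (exp x <= 1 + 2 * x) by nra.
  lra.
Qed.

Lemma sinh_ln (x : R) : 0 < x -> sinh (ln x) = (x - / x) / 2.
Proof. intros; unfold sinh; rewrite exp_Ropp, exp_ln by assumption; reflexivity. Qed.

Lemma ln_pos (x : R) : 1 < x -> 0 < ln x.
Proof. intros; rewrite <- ln_1; apply ln_increasing; lra. Qed.

Lemma cos_3a (x : R) : cos (3 * x) = 4 * cos x ^ 3 - 3 * cos x.
Proof.
  replace (3 * x) with (2 * x + x) by ring.
  rewrite cos_plus, cos_2a_cos, sin_2a.
  assert (Hs : sin x * sin x = 1 - cos x * cos x)
    by (pose proof (sin2_cos2 x); unfold Rsqr in *; lra).
  transitivity ((2 * cos x * cos x - 1) * cos x - 2 * cos x * (sin x * sin x)); [ring|].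
  rewrite Hs; ring.
Qed.

Lemma cos_4a (x : R) : cos (4 * x) = 8 * cos x ^ 4 - 8 * cos x ^ 2 + 1.
Proof.
  replace (4 * x) with (2 * (2 * x)) by ring.
  rewrite cos_2a_cos, cos_2a_cos. ring.
Qed.

Lemma cos_Rabs (x : R) : cos (Rabs x) = cos x.
Proof. unfold Rabs; destruct (Rcase_abs x); [apply cos_neg | reflexivity]. Qed.

Lemma cos_minus_2kPI (x : R) (k : Z) : cos (x - 2 * IZR k * PI) = cos x.
Proof.
  destruct (Z_le_gt_dec 0 k) as [Hk | Hk].
  - rewrite <- (Z2Nat.id k Hk), <- INR_IZR_INZ.
    set (n := Z.to_nat k); rewrite <- (cos_period (x - 2 * INR n * PI) n). f_equal; ring.
  - replace k with (- Z.of_nat (Z.to_nat (- k)))%Z by lia.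
    rewrite opp_IZR, <- INR_IZR_INZ.
    replace (x - 2 * - INR (Z.to_nat (- k)) * PI) with (x + 2 * INR (Z.to_nat (- k)) * PI) by ring.
    apply cos_period.
Qed.

Lemma acos_le_of_cos (s a : R) : -1 <= s <= 1 -> 0 <= a <= PI -> cos a <= s -> acos s <= a.
Proof.
  intros Hs Ha Hcos; pose proof (acos_bound s).
  destruct (Rle_lt_dec (acos s) a) as [|Hlt]; [assumption|].
  pose proof (cos_decreasing_1 a (acos s) ltac:(lra) ltac:(lra) ltac:(lra) ltac:(lra) Hlt) as Hc.
  rewrite cos_acos in Hc by assumption; lra.
Qed.

Lemma acos_lt_of_cos (s a : R) : -1 <= s <= 1 -> 0 <= a <= PI -> cos a < s -> acos s < a.
Proof.
  intros Hs Ha Hcos.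
  destruct (acos_le_of_cos s a Hs Ha (Rlt_le _ _ Hcos)) as [|Heq]; [assumption|].
  rewrite <- Heq, cos_acos in Hcos by assumption; lra.
Qed.

(** * Hyperbolic distance in the upper half-plane *)

Definition px (p : hpoint) : R := fst (proj1_sig p).

Definition py (p : hpoint) : R := snd (proj1_sig p).

Lemma py_pos (p : hpoint) : 0 < py p.
Proof. exact (proj2_sig p). Qed.

Lemma hpoint_eq (p q : hpoint) : px p = px q -> py p = py q -> p = q.
Proof.
  destruct p as [[x y] Hp], q as [[x' y'] Hq]; unfold px, py; simpl; intros -> ->.
  f_equal; apply proof_irrelevance.
Qed.

Definition hcosh (p q : hpoint) : R :=
  1 + ((px p - px q) ^ 2 + (py p - py q) ^ 2) / (2 * py p * py q).

Lemma hdist_hcosh (p q : hpoint) : hdist p q = arcosh (hcosh p q).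
Proof. destruct p as [[x1 y1] H1], q as [[x2 y2] H2]; reflexivity. Qed.

Lemma hcosh_sym (p q : hpoint) : hcosh p q = hcosh q p.
Proof. unfold hcosh; f_equal; f_equal; ring. Qed.

Lemma hcosh_refl (p : hpoint) : hcosh p p = 1.
Proof. unfold hcosh; rewrite !Rminus_diag; field; pose proof (py_pos p); lra. Qed.

Lemma hcosh_ge1 (p q : hpoint) : 1 <= hcosh p q.
Proof.
  unfold hcosh; pose proof (py_pos p); pose proof (py_pos q).
  assert (0 <= ((px p - px q) ^ 2 + (py p - py q) ^ 2) / (2 * py p * py q)); [|lra].
  unfold Rdiv; apply Rmult_le_pos; [|apply Rlt_le, Rinv_0_lt_compat; nra].
  pose proof (pow2_ge_0 (px p - px q)); pose proof (pow2_ge_0 (py p - py q)); lra.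
Qed.

Lemma hcosh_gt1 (p q : hpoint) : p <> q -> 1 < hcosh p q.
Proof.
  intros Hpq; unfold hcosh; pose proof (py_pos p); pose proof (py_pos q).
  assert (Hsum : 0 < (px p - px q)² + (py p - py q)²).
  { pose proof (Rle_0_sqr (px p - px q)); pose proof (Rle_0_sqr (py p - py q)).
    destruct (Req_dec (px p) (px q)) as [Hx|Hx].
    - destruct (Req_dec (py p) (py q)) as [Hy|Hy].
      + exfalso; apply Hpq, hpoint_eq; assumption.
      + enough (0 < (py p - py q)²) by lra. apply Rsqr_pos_lt; lra.
    - enough (0 < (px p - px q)²) by lra. apply Rsqr_pos_lt; lra. }
  rewrite !Rsqr_pow2 in Hsum.
  enough (0 < ((px p - px q) ^ 2 + (py p - py q) ^ 2) / (2 * py p * py q)) by lra.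
  apply Rdiv_lt_0_compat; nra.
Qed.

Lemma hdist_le_iff (p q : hpoint) (r : R) :
  0 <= r -> (hdist p q <= r <-> hcosh p q <= cosh r).
Proof. intros; rewrite hdist_hcosh; apply arcosh_le_iff; [apply hcosh_ge1 | assumption]. Qed.

Lemma HUDG_iff_hcosh (rho : R) (V : Type) (adj : V -> V -> Prop) :
  0 <= rho ->
  HUDG rho V adj <->
  exists f : V -> hpoint, (forall u v, f u = f v -> u = v) /\
    (forall u v, u <> v -> (adj u v <-> hcosh (f u) (f v) <= cosh (2 * rho))).
Proof.
  intros Hrho; unfold HUDG.
  split; intros [f [Hinj Hadj]]; exists f; split; try assumption;
    intros u v Huv; rewrite (Hadj u v Huv), hdist_le_iff by lra; reflexivity.
Qed.

Lemma HUDG_subsingleton (rho : R) (V : Type) (adj : V -> V -> Prop) :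
  (forall u v : V, u = v) -> HUDG rho V adj.
Proof.
  intros Hsub. exists (fun _ => exist (fun p : R * R => 0 < snd p) (0, 1) Rlt_0_1).
  split; [intros u v _; apply Hsub | intros u v Huv; contradiction (Huv (Hsub u v))].
Qed.

(* Heights are clamped to [1] so that the constructor needs no positivity proof;
   all points used below have height at least [1]. *)
Definition hpt (x y : R) : hpoint :=
  exist (fun p : R * R => 0 < snd p) (x, Rmax 1 y) (Rlt_le_trans _ _ _ Rlt_0_1 (Rmax_l 1 y)).

Lemma hcosh_hpt (x1 y1 x2 y2 : R) : 1 <= y1 -> 1 <= y2 ->
  hcosh (hpt x1 y1) (hpt x2 y2) = 1 + ((x1 - x2) ^ 2 + (y1 - y2) ^ 2) / (2 * y1 * y2).
Proof. intros; unfold hcosh, hpt, px, py; simpl; rewrite !Rmax_right by lra; reflexivity. Qed.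

Lemma hpt_inj (x1 y1 x2 y2 : R) : 1 <= y1 -> 1 <= y2 ->
  hpt x1 y1 = hpt x2 y2 -> x1 = x2 /\ y1 = y2.
Proof.
  intros H1 H2 E; apply (f_equal (@proj1_sig _ _)) in E; simpl in E.
  rewrite !Rmax_right in E by lra; injection E; auto.
Qed.

(** * The hyperbolic law of cosines *)

Definition polar_angle (x y : R) : R :=
  if Rle_dec 0 y then acos (x / sqrt (x ^ 2 + y ^ 2))
  else - acos (x / sqrt (x ^ 2 + y ^ 2)).

Lemma polar_angle_bound (x y : R) : - PI <= polar_angle x y <= PI.
Proof.
  pose proof (acos_bound (x / sqrt (x ^ 2 + y ^ 2))).
  unfold polar_angle; destruct (Rle_dec 0 y); lra.
Qed.

Lemma polar_coords (x y : R) :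
  x = sqrt (x ^ 2 + y ^ 2) * cos (polar_angle x y) /\
  y = sqrt (x ^ 2 + y ^ 2) * sin (polar_angle x y).
Proof.
  set (r := sqrt (x ^ 2 + y ^ 2)).
  assert (Hr2 : r * r = x ^ 2 + y ^ 2)
    by (apply sqrt_sqrt; pose proof (pow2_ge_0 x); pose proof (pow2_ge_0 y); lra).
  destruct (Req_dec r 0) as [Hr0|Hr0].
  { rewrite Hr0 in Hr2 |- *. split; nra. }
  assert (Hr : 0 < r) by (pose proof (sqrt_pos (x ^ 2 + y ^ 2)) as Hpos; fold r in Hpos; lra).
  assert (Ha : -1 <= x / r <= 1).
  { split; [apply (Rmult_le_reg_r r) | apply (Rmult_le_reg_r r)]; try assumption;
      field_simplify; nra. }
  assert (Hsin : sqrt (1 - (x / r)²) = Rabs (y / r)).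
  { rewrite <- sqrt_Rsqr_abs. f_equal. unfold Rsqr. field_simplify_eq; nra. }
  unfold polar_angle; fold r; destruct (Rle_dec 0 y).
  - assert (0 <= y / r) by (unfold Rdiv; apply Rmult_le_pos; [|left; apply Rinv_0_lt_compat]; lra).
    rewrite cos_acos, sin_acos, Hsin, Rabs_right by lra. split; field; lra.
  - assert (y / r < 0) by (apply Rdiv_neg_pos; lra).
    rewrite cos_neg, sin_neg, cos_acos, sin_acos, Hsin, Rabs_left by lra. split; field; lra.
Qed.

Definition sinh_of_cosh (t : R) : R := sqrt (t ^ 2 - 1).

Lemma sinh_of_cosh_sq (t : R) : 1 <= t -> sinh_of_cosh t * sinh_of_cosh t = t ^ 2 - 1.
Proof. intros; apply sqrt_sqrt; nra. Qed.

Lemma sinh_of_cosh_pos (t : R) : 1 < t -> 0 < sinh_of_cosh t.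
Proof. intros; apply sqrt_lt_R0; nra. Qed.

Lemma sinh_of_cosh_lt7 (t : R) : 1 <= t < 7 -> sinh_of_cosh t < 7.
Proof.
  intros Ht; unfold sinh_of_cosh; rewrite <- (sqrt_square 7) by lra.
  apply sqrt_lt_1; nra.
Qed.

(* Spatial coordinates of [p] in the hyperboloid model, for the isometry that sends [c]
   to [(1, 0, 0)]; the time coordinate is [hcosh c p]. *)
Section Lorentz.

Variable c : hpoint.

Definition lorentz_x (p : hpoint) : R := (px p - px c) / py p.

Definition lorentz_y (p : hpoint) : R :=
  ((px p - px c) ^ 2 + py p ^ 2 - py c ^ 2) / (2 * py p * py c).

Lemma hcosh_lorentz (p q : hpoint) :
  hcosh p q = hcosh c p * hcosh c q - (lorentz_x p * lorentz_x q + lorentz_y p * lorentz_y q).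
Proof.
  unfold hcosh, lorentz_x, lorentz_y.
  pose proof (py_pos p); pose proof (py_pos q); pose proof (py_pos c).
  field; repeat split; lra.
Qed.

Lemma lorentz_norm (p : hpoint) : lorentz_x p ^ 2 + lorentz_y p ^ 2 = hcosh c p ^ 2 - 1.
Proof.
  unfold hcosh, lorentz_x, lorentz_y; pose proof (py_pos p); pose proof (py_pos c).
  field; lra.
Qed.

Definition hangle (p : hpoint) : R := polar_angle (lorentz_x p) (lorentz_y p).

Theorem hyperbolic_law_of_cosines (p q : hpoint) :
  hcosh p q = hcosh c p * hcosh c q
    - sinh_of_cosh (hcosh c p) * sinh_of_cosh (hcosh c q) * cos (hangle p - hangle q).
Proof.
  rewrite hcosh_lorentz, cos_minus. unfold sinh_of_cosh, hangle.
  rewrite <- !lorentz_norm.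
  destruct (polar_coords (lorentz_x p) (lorentz_y p)) as [Hp1 Hp2].
  destruct (polar_coords (lorentz_x q) (lorentz_y q)) as [Hq1 Hq2].
  set (rp := sqrt (lorentz_x p ^ 2 + lorentz_y p ^ 2)) in *.
  set (rq := sqrt (lorentz_x q ^ 2 + lorentz_y q ^ 2)) in *.
  set (ap := polar_angle (lorentz_x p) (lorentz_y p)) in *.
  set (aq := polar_angle (lorentz_x q) (lorentz_y q)) in *.
  rewrite Hp1, Hp2, Hq1, Hq2. ring.
Qed.

End Lorentz.

Definition cos_threshold (K t u : R) : R :=
  (t * u - K) / (sinh_of_cosh t * sinh_of_cosh u).

(* With [u = cosh a], [v = cosh b]: the two facts below say [sinh (b - a) > 0] and
   [sinh (b - a) < sinh b - sinh a]. *)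
Lemma cos_threshold_lt (K t u v : R) :
  1 < t <= K -> 1 < u < v -> cos_threshold K t u < cos_threshold K t v.
Proof.
  intros Ht Huv; unfold cos_threshold.
  assert (Hst := sinh_of_cosh_pos t ltac:(lra)); assert (Et := sinh_of_cosh_sq t ltac:(lra)).
  assert (Hsu := sinh_of_cosh_pos u ltac:(lra)); assert (Eu := sinh_of_cosh_sq u ltac:(lra)).
  assert (Hsv := sinh_of_cosh_pos v ltac:(lra)); assert (Ev := sinh_of_cosh_sq v ltac:(lra)).
  set (st := sinh_of_cosh t) in *; set (su := sinh_of_cosh u) in *; set (sv := sinh_of_cosh v) in *.
  assert (Hrot : v * su < u * sv).
  { apply lt_of_sq_lt; [nra|].
    replace (v * su * (v * su)) with (v ^ 2 * (su * su)) by ring.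
    replace (u * sv * (u * sv)) with (u ^ 2 * (sv * sv)) by ring.
    rewrite Eu, Ev; nra. }
  assert (Hgap : (u - 1) * sv < (v - 1) * su).
  { apply lt_of_sq_lt; [nra|].
    replace ((u - 1) * sv * ((u - 1) * sv)) with ((u - 1) ^ 2 * (sv * sv)) by ring.
    replace ((v - 1) * su * ((v - 1) * su)) with ((v - 1) ^ 2 * (su * su)) by ring.
    rewrite Eu, Ev.
    assert (0 < (u - 1) * (v - 1) * (v - u))
      by (apply Rmult_lt_0_compat; [apply Rmult_lt_0_compat|]; lra).
    assert ((v - 1) ^ 2 * (u ^ 2 - 1) - (u - 1) ^ 2 * (v ^ 2 - 1)
            = 2 * ((u - 1) * (v - 1) * (v - u))) by ring.
    lra. }
  apply (Rmult_lt_reg_r (st * su * sv)); [repeat apply Rmult_lt_0_compat; assumption|].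
  replace ((t * u - K) / (st * su) * (st * su * sv)) with ((t * u - K) * sv) by (field; lra).
  replace ((t * v - K) / (st * sv) * (st * su * sv)) with ((t * v - K) * su) by (field; lra).
  assert (0 <= (K - t) * (u * sv - v * su)) by (apply Rmult_le_pos; lra).
  assert (0 < K * ((sv - su) - (u * sv - v * su))) by (apply Rmult_lt_0_compat; lra).
  nra.
Qed.

Lemma cos_threshold_le (K t u v : R) :
  1 < t <= K -> 1 < u <= v -> cos_threshold K t u <= cos_threshold K t v.
Proof.
  intros Ht [Hu [Huv | <-]]; [left; apply cos_threshold_lt; lra | lra].
Qed.

(* Seen from [c], the angle [acos (shadow_cos K t)] around a point [p] with [hcosh c p = t]
   strictly contains the directions of the points beyond [K] from [c] but within [K] of
   [p], and strictly excludes those within [K] of [c] but beyond [K] from [p]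
   ([cos_angle_gt_of_near], [cos_angle_lt_of_far]). *)
Definition shadow_cos (K t : R) : R := cos_threshold K t K.

Lemma shadow_cos_pos (K t : R) : 1 < t -> 1 < K -> 0 < shadow_cos K t.
Proof.
  intros; unfold shadow_cos, cos_threshold; apply Rdiv_lt_0_compat; [nra|].
  apply Rmult_lt_0_compat; apply sinh_of_cosh_pos; assumption.
Qed.

Lemma shadow_cos_le (K t : R) : 1 < t <= K -> shadow_cos K t <= K / (K + 1).
Proof.
  intros Ht; unfold shadow_cos, cos_threshold.
  assert (Hst := sinh_of_cosh_pos t ltac:(lra)); assert (Et := sinh_of_cosh_sq t ltac:(lra)).
  assert (HsK := sinh_of_cosh_pos K ltac:(lra)); assert (EK := sinh_of_cosh_sq K ltac:(lra)).
  set (st := sinh_of_cosh t) in *; set (sK := sinh_of_cosh K) in *.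
  assert (H : (t - 1) * (K + 1) <= sK * st).
  { apply Rsqr_incr_0; [unfold Rsqr | nra | nra].
    replace (sK * st * (sK * st)) with ((sK * sK) * (st * st)) by ring.
    rewrite Et, EK.
    assert ((K ^ 2 - 1) * (t ^ 2 - 1) - (t - 1) * (K + 1) * ((t - 1) * (K + 1))
            = 2 * ((t - 1) * (K + 1) * (K - t))) by ring.
    assert (0 <= (t - 1) * (K + 1) * (K - t)) by (apply Rmult_le_pos; [apply Rmult_le_pos|]; lra).
    lra. }
  apply (Rmult_le_reg_r (st * sK * (K + 1))); [apply Rmult_lt_0_compat; nra|].
  replace ((t * K - K) / (st * sK) * (st * sK * (K + 1))) with (K * ((t - 1) * (K + 1)))
    by (field; lra).
  replace (K / (K + 1) * (st * sK * (K + 1))) with (K * (sK * st)) by (field; lra).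
  apply Rmult_le_compat_l; lra.
Qed.

Lemma shadow_cos_ge (K t : R) : 7 <= t <= K -> sqrt 3 / 2 <= shadow_cos K t.
Proof.
  intros Ht; unfold shadow_cos, cos_threshold.
  assert (Hst := sinh_of_cosh_pos t ltac:(lra)); assert (Et := sinh_of_cosh_sq t ltac:(lra)).
  assert (HsK := sinh_of_cosh_pos K ltac:(lra)); assert (EK := sinh_of_cosh_sq K ltac:(lra)).
  set (st := sinh_of_cosh t) in *; set (sK := sinh_of_cosh K) in *.
  assert (Hs3 := Rlt_sqrt3_0); assert (E3 : sqrt 3 * sqrt 3 = 3) by (apply sqrt_sqrt; lra).
  assert (HsKK : sK <= K) by nra.
  assert (H : sqrt 3 * st <= 2 * (t - 1)).
  { apply Rsqr_incr_0; [unfold Rsqr | nra | lra].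
    replace (sqrt 3 * st * (sqrt 3 * st)) with ((sqrt 3 * sqrt 3) * (st * st)) by ring.
    rewrite E3, Et; nra. }
  apply (Rmult_le_reg_r (2 * (st * sK))); [nra|].
  replace ((t * K - K) / (st * sK) * (2 * (st * sK))) with (2 * (t - 1) * K) by (field; lra).
  replace (sqrt 3 / 2 * (2 * (st * sK))) with (sqrt 3 * st * sK) by field.
  assert (sqrt 3 * st * sK <= 2 * (t - 1) * sK) by (apply Rmult_le_compat_r; lra).
  assert (2 * (t - 1) * sK <= 2 * (t - 1) * K) by (apply Rmult_le_compat_l; lra).
  lra.
Qed.

Section AnglesAtCenter.

Variable c : hpoint.

Lemma hcosh_le_iff_cos (K : R) (p q : hpoint) :
  p <> c -> q <> c ->
  (hcosh p q <= K <->
   cos_threshold K (hcosh c p) (hcosh c q) <= cos (hangle c p - hangle c q)).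
Proof.
  intros Hp Hq; unfold cos_threshold; rewrite (hyperbolic_law_of_cosines c).
  rewrite div_le_iff
    by (apply Rmult_lt_0_compat; apply sinh_of_cosh_pos, hcosh_gt1, not_eq_sym; assumption).
  lra.
Qed.

Lemma hcosh_le_add (p q : hpoint) :
  hcosh p q <= hcosh c p * hcosh c q + sinh_of_cosh (hcosh c p) * sinh_of_cosh (hcosh c q).
Proof.
  rewrite (hyperbolic_law_of_cosines c).
  assert (0 <= sinh_of_cosh (hcosh c p) * sinh_of_cosh (hcosh c q))
    by (apply Rmult_le_pos; apply sqrt_pos).
  pose proof (COS_bound (hangle c p - hangle c q)). nra.
Qed.

Variable K : R.
Hypothesis HK : 1 < K.

Lemma cos_angle_lt_of_far (p q : hpoint) :
  p <> c -> q <> c -> hcosh c p <= K -> hcosh c q <= K -> K < hcosh p q ->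
  cos (hangle c p - hangle c q) < shadow_cos K (hcosh c p).
Proof.
  intros Hp Hq HpK HqK Hfar.
  assert (Hlt : cos (hangle c p - hangle c q) < cos_threshold K (hcosh c p) (hcosh c q)).
  { apply Rnot_le_lt; rewrite <- hcosh_le_iff_cos by assumption; lra. }
  eapply Rlt_le_trans; [exact Hlt|].
  apply cos_threshold_le; split; try assumption; apply hcosh_gt1, not_eq_sym; assumption.
Qed.

Lemma cos_angle_gt_of_near (p q : hpoint) :
  p <> c -> hcosh c p <= K -> K < hcosh c q -> hcosh p q <= K ->
  shadow_cos K (hcosh c p) < cos (hangle c p - hangle c q).
Proof.
  intros Hp HpK HqK Hnear.
  assert (Hq : q <> c) by (intros ->; rewrite hcosh_refl in HqK; lra).
  eapply Rlt_le_trans; [|apply (hcosh_le_iff_cos K p q Hp Hq); exact Hnear].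
  apply cos_threshold_lt; split; try assumption; apply hcosh_gt1, not_eq_sym; assumption.
Qed.

End AnglesAtCenter.

Lemma hcosh_lt_98 (c p q : hpoint) : hcosh c p < 7 -> hcosh c q < 7 -> hcosh p q < 98.
Proof.
  intros Hp Hq; pose proof (hcosh_le_add c p q).
  pose proof (hcosh_ge1 c p); pose proof (hcosh_ge1 c q).
  pose proof (sinh_of_cosh_lt7 (hcosh c p) ltac:(lra)).
  pose proof (sinh_of_cosh_lt7 (hcosh c q) ltac:(lra)).
  pose proof (sqrt_pos (hcosh c p ^ 2 - 1)); pose proof (sqrt_pos (hcosh c q ^ 2 - 1)).
  unfold sinh_of_cosh in *; nra.
Qed.

(** * Small radius: at most six leaves *)

Fixpoint rsum (n : nat) (g : nat -> R) : R :=
  match n with O => 0 | S m => rsum m g + g m end.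

Lemma rsum_ext (n : nat) (f g : nat -> R) :
  (forall i, (i < n)%nat -> f i = g i) -> rsum n f = rsum n g.
Proof.
  induction n as [|n IH]; intros H; simpl; [reflexivity|].
  rewrite IH; [rewrite H by lia; reflexivity | intros; apply H; lia].
Qed.

Lemma rsum_le (n : nat) (f g : nat -> R) :
  (forall i, (i < n)%nat -> f i <= g i) -> rsum n f <= rsum n g.
Proof.
  induction n as [|n IH]; intros H; simpl; [lra|].
  assert (rsum n f <= rsum n g) by (apply IH; intros; apply H; lia).
  assert (f n <= g n) by (apply H; lia). lra.
Qed.

Lemma rsum_plus (n : nat) (f g : nat -> R) :
  rsum n (fun i => f i + g i) = rsum n f + rsum n g.
Proof. induction n as [|n IH]; simpl; [ring | rewrite IH; ring]. Qed.

Lemma rsum_scal (n : nat) (a : R) (f : nat -> R) :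
  rsum n (fun i => a * f i) = a * rsum n f.
Proof. induction n as [|n IH]; simpl; [ring | rewrite IH; ring]. Qed.

Lemma rsum_const (n : nat) (a : R) : rsum n (fun _ => a) = INR n * a.
Proof. induction n as [|n IH]; simpl rsum; [simpl; ring | rewrite IH, S_INR; ring]. Qed.

Lemma rsum_le_term (n i : nat) (g : nat -> R) :
  (i < n)%nat -> (forall j, (j < n)%nat -> j <> i -> g j <= 0) -> rsum n g <= g i.
Proof.
  induction n as [|n IH]; intros Hi Hg; [lia|]; simpl.
  destruct (Nat.eq_dec i n) as [->|Hne].
  - enough (rsum n g <= rsum n (fun _ => 0)) by (rewrite rsum_const in *; lra).
    apply rsum_le; intros j Hj; apply Hg; lia.
  - assert (rsum n g <= g i) by (apply IH; [lia | intros; apply Hg; lia]).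
    assert (g n <= 0) by (apply Hg; lia). lra.
Qed.

Lemma rsum_cos_diff (n : nat) (th : nat -> R) :
  rsum n (fun i => rsum n (fun j => cos (th i - th j)))
  = (rsum n (fun i => cos (th i))) ^ 2 + (rsum n (fun i => sin (th i))) ^ 2.
Proof.
  set (C := rsum n (fun i => cos (th i))); set (S := rsum n (fun i => sin (th i))).
  transitivity (rsum n (fun i => C * cos (th i) + S * sin (th i))).
  - apply rsum_ext; intros i _.
    transitivity (rsum n (fun j => cos (th i) * cos (th j) + sin (th i) * sin (th j))).
    + apply rsum_ext; intros j _; apply cos_minus.
    + rewrite rsum_plus, !rsum_scal; fold C S; ring.
  - rewrite rsum_plus, !rsum_scal; fold C S; ring.
Qed.

Lemma rsum_cos_diff_nonneg (n : nat) (th : nat -> R) :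
  0 <= rsum n (fun i => rsum n (fun j => cos (th i - th j))).
Proof.
  rewrite rsum_cos_diff.
  pose proof (pow2_ge_0 (rsum n (fun i => cos (th i)))).
  pose proof (pow2_ge_0 (rsum n (fun i => sin (th i)))). lra.
Qed.

(* Delsarte's linear-programming polynomial for directions pairwise at angle above
   [acos (11/20)]: nonpositive on [[-1, 11/20]], yet a cosine polynomial with
   nonnegative coefficients. *)
Definition delsarte_poly (t : R) : R := (t - 11/20) * (t + 1/2) ^ 2 * (t + 1).

Lemma delsarte_poly_cos (x : R) :
  delsarte_poly (cos x) = 5/16 + 13/20 * cos x + 23/40 * cos (2 * x)
                          + 29/80 * cos (3 * x) + 1/8 * cos (4 * x).
Proof. unfold delsarte_poly; rewrite cos_2a_cos, cos_3a, cos_4a; field. Qed.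

Lemma delsarte_poly_nonpos (t : R) : -1 <= t < 11/20 -> delsarte_poly t <= 0.
Proof.
  intros Ht; unfold delsarte_poly.
  assert (0 <= (t + 1/2) ^ 2 * (t + 1)) by (apply Rmult_le_pos; [apply pow2_ge_0 | lra]).
  nra.
Qed.

Lemma rsum_delsarte_lower (n : nat) (th : nat -> R) :
  5/16 * (INR n * INR n) <= rsum n (fun i => rsum n (fun j => delsarte_poly (cos (th i - th j)))).
Proof.
  set (D m := rsum n (fun i => rsum n (fun j => cos (m * th i - m * th j)))).
  assert (HD : forall m, 0 <= D m) by (intros; apply rsum_cos_diff_nonneg).
  enough (rsum n (fun i => rsum n (fun j => delsarte_poly (cos (th i - th j))))
          = 5/16 * (INR n * INR n) + 13/20 * D 1 + 23/40 * D 2 + 29/80 * D 3 + 1/8 * D 4)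
    by (pose proof (HD 1); pose proof (HD 2); pose proof (HD 3); pose proof (HD 4); lra).
  unfold D.
  transitivity (rsum n (fun i => 5/16 * INR n
    + 13/20 * rsum n (fun j => cos (1 * th i - 1 * th j))
    + 23/40 * rsum n (fun j => cos (2 * th i - 2 * th j))
    + 29/80 * rsum n (fun j => cos (3 * th i - 3 * th j))
    + 1/8 * rsum n (fun j => cos (4 * th i - 4 * th j)))).
  - apply rsum_ext; intros i _.
    transitivity (rsum n (fun j => 5/16
      + 13/20 * cos (1 * th i - 1 * th j) + 23/40 * cos (2 * th i - 2 * th j)
      + 29/80 * cos (3 * th i - 3 * th j) + 1/8 * cos (4 * th i - 4 * th j))).
    + apply rsum_ext; intros j _.
      rewrite delsarte_poly_cos, <- !Rmult_minus_distr_l, Rmult_1_l; reflexivity.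
    + rewrite !rsum_plus, !rsum_scal, rsum_const; ring.
  - rewrite !rsum_plus, !rsum_scal, rsum_const; ring.
Qed.

Lemma rsum_delsarte_upper (n : nat) (th : nat -> R) :
  (forall i j, (i < n)%nat -> (j < n)%nat -> i <> j -> cos (th i - th j) < 11/20) ->
  rsum n (fun i => rsum n (fun j => delsarte_poly (cos (th i - th j)))) <= INR n * (81/40).
Proof.
  intros Hfar; rewrite <- rsum_const; apply rsum_le; intros i Hi.
  replace (81/40) with (delsarte_poly (cos (th i - th i)))
    by (rewrite Rminus_diag, cos_0; unfold delsarte_poly; field).
  apply (rsum_le_term n i (fun j => delsarte_poly (cos (th i - th j)))); [assumption|].
  intros j Hj Hji; apply delsarte_poly_nonpos; split; [apply COS_bound | apply Hfar; auto].
Qed.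

Lemma angles_spread_bound (n : nat) (th : nat -> R) :
  (forall i j, (i < n)%nat -> (j < n)%nat -> i <> j -> cos (th i - th j) < 11/20) ->
  (n <= 6)%nat.
Proof.
  intros Hfar.
  pose proof (rsum_delsarte_lower n th); pose proof (rsum_delsarte_upper n th Hfar).
  destruct (Compare_dec.le_lt_dec n 6) as [|H7]; [assumption|].
  assert (7 <= INR n) by (replace 7 with (INR 7) by (simpl; lra); apply le_INR; lia).
  nra.
Qed.

Lemma star_leaf_angle (c p q : hpoint) (K : R) :
  1 < K <= 11/9 -> p <> c -> q <> c ->
  hcosh c p <= K -> hcosh c q <= K -> K < hcosh p q ->
  cos (hangle c p - hangle c q) < 11/20.
Proof.
  intros HK Hp Hq HpK HqK Hfar.
  eapply Rlt_le_trans; [apply (cos_angle_lt_of_far c K); auto; lra|].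
  eapply Rle_trans; [apply shadow_cos_le; split; [apply hcosh_gt1, not_eq_sym|]; assumption|].
  apply (Rmult_le_reg_r (K + 1)); [lra|].
  replace (K / (K + 1) * (K + 1)) with K by (field; lra). lra.
Qed.

Lemma star_HUDG_small_radius_le (n : nat) (rho : R) :
  0 < rho -> cosh (2 * rho) <= 11/9 -> HUDG rho (star_vertex n) (star_adj n) -> (n <= 7)%nat.
Proof.
  intros Hrho HK Hstar.
  apply HUDG_iff_hcosh in Hstar as [f [Hinj Hadj]]; [|lra].
  destruct n as [|n]; [lia|].
  set (c := f (exist _ 0%nat (Nat.lt_0_succ n))).
  set (pt j := match lt_dec j (S n) with left h => f (exist _ j h) | right _ => c end).
  enough (n <= 6)%nat by lia.
  apply (angles_spread_bound n (fun i => hangle c (pt (S i)))).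
  intros i j Hi Hj Hij.
  unfold pt; destruct (lt_dec (S i) (S n)) as [Hi'|]; [|lia];
    destruct (lt_dec (S j) (S n)) as [Hj'|]; [|lia].
  pose proof (cosh_2a_gt1 rho Hrho).
  apply (star_leaf_angle c _ _ (cosh (2 * rho))); [lra | | | | |].
  - intros E; apply Hinj in E; injection E; lia.
  - intros E; apply Hinj in E; injection E; lia.
  - apply Hadj; [intros E; injection E; lia | split; simpl; lia].
  - apply Hadj; [intros E; injection E; lia | split; simpl; lia].
  - apply Rnot_le_lt; rewrite <- Hadj by (intros E; injection E; lia).
    intros [_ [H0 | H0]]; simpl in H0; lia.
Qed.

(** * Large radius: no 3 x 3 grid *)

(* Let [x_m] be the leftmost point and [x_p <= x_q] its two neighbours in the cycle:
   then [x_p - x_m > a_m] and [x_q - x_p > a_q], so [x_q - x_m > a_m + a_q]. *)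
Lemma no_cyclic_interval_chain (x0 x1 x2 x3 a0 a1 a2 a3 : R) :
  Rabs (x0 - x1) < a0 + a1 -> Rabs (x1 - x2) < a1 + a2 ->
  Rabs (x2 - x3) < a2 + a3 -> Rabs (x3 - x0) < a3 + a0 ->
  Rmax a0 a1 < Rabs (x0 - x1) -> Rmax a0 a2 < Rabs (x0 - x2) ->
  Rmax a0 a3 < Rabs (x0 - x3) -> Rmax a1 a2 < Rabs (x1 - x2) ->
  Rmax a1 a3 < Rabs (x1 - x3) -> Rmax a2 a3 < Rabs (x2 - x3) -> False.
Proof.
  rewrite (Rabs_minus_sym x3 x0); intros.
  pose proof (Rmax_l a0 a1); pose proof (Rmax_r a0 a1); pose proof (Rmax_l a0 a2);
  pose proof (Rmax_r a0 a2); pose proof (Rmax_l a0 a3); pose proof (Rmax_r a0 a3);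
  pose proof (Rmax_l a1 a2); pose proof (Rmax_r a1 a2); pose proof (Rmax_l a1 a3);
  pose proof (Rmax_r a1 a3); pose proof (Rmax_l a2 a3); pose proof (Rmax_r a2 a3).
  repeat match goal with
  | H : context [Rabs ?d] |- _ =>
      destruct (Rle_lt_dec 0 d);
      [rewrite (Rabs_right d) in * by lra | rewrite (Rabs_left d) in * by lra]
  end; lra.
Qed.

Definition near_mod_2PI (x y a : R) : Prop :=
  exists k : Z, Rabs (x - y - 2 * IZR k * PI) < a.

Definition apart_mod_2PI (x y a : R) : Prop :=
  forall k : Z, a < Rabs (x - y - 2 * IZR k * PI).

Lemma near_mod_2PI_sym (x y a : R) : near_mod_2PI x y a -> near_mod_2PI y x a.
Proof.
  intros [k Hk]; exists (- k)%Z; rewrite opp_IZR, <- Rabs_Ropp.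
  now replace (- (y - x - 2 * - IZR k * PI)) with (x - y - 2 * IZR k * PI) by ring.
Qed.

Lemma near_mod_2PI_trans (x y z a b : R) :
  near_mod_2PI x y a -> near_mod_2PI y z b -> near_mod_2PI x z (a + b).
Proof.
  intros [k Hk] [l Hl]; exists (k + l)%Z; rewrite plus_IZR.
  replace (x - z - 2 * (IZR k + IZR l) * PI)
    with ((x - y - 2 * IZR k * PI) + (y - z - 2 * IZR l * PI)) by ring.
  eapply Rle_lt_trans; [apply Rabs_triang | lra].
Qed.

Lemma near_mod_2PI_of_cos (x y a : R) :
  - PI <= x <= PI -> - PI <= y <= PI -> 0 <= a <= PI -> cos a < cos (x - y) ->
  near_mod_2PI x y a.
Proof.
  intros Hx Hy Ha Hcos.
  assert (Hk : exists k : Z, - PI <= x - y - 2 * IZR k * PI <= PI).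
  { destruct (Rle_lt_dec (x - y) PI); [destruct (Rle_lt_dec (- PI) (x - y))|].
    - exists 0%Z; simpl; lra.
    - exists (-1)%Z; simpl; lra.
    - exists 1%Z; simpl; lra. }
  destruct Hk as [k Hk]; exists k.
  rewrite <- (cos_minus_2kPI (x - y) k), <- (cos_Rabs (x - y - _)) in Hcos.
  apply (cos_decreasing_0 a); try apply Rabs_pos; try apply Rabs_le; lra.
Qed.

Lemma apart_mod_2PI_of_cos (x y a : R) :
  0 <= a <= PI -> cos (x - y) < cos a -> apart_mod_2PI x y a.
Proof.
  intros Ha Hcos k.
  rewrite <- (cos_minus_2kPI (x - y) k), <- (cos_Rabs (x - y - _)) in Hcos.
  destruct (Rlt_le_dec a (Rabs (x - y - 2 * IZR k * PI))) as [|[Hlt | Heq]]; [assumption | |].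
  - pose proof (Rabs_pos (x - y - 2 * IZR k * PI)) as H0.
    pose proof (cos_decreasing_1 _ a H0 ltac:(lra) ltac:(lra) ltac:(lra) Hlt); lra.
  - rewrite Heq in Hcos; lra.
Qed.

Lemma shift_2PI (x y : R) (k m n : Z) :
  n = (m + k)%Z -> (x + 2 * IZR m * PI) - (y + 2 * IZR n * PI) = x - y - 2 * IZR k * PI.
Proof. intros ->; rewrite plus_IZR; ring. Qed.

Lemma no_cyclic_arc_chain (t a : nat -> R) :
  a 0%nat + a 1%nat + a 2%nat + a 3%nat < PI ->
  (forall i, (i < 4)%nat -> near_mod_2PI (t i) (t (S i mod 4)) (a i + a (S i mod 4))) ->
  (forall i j, (i < 4)%nat -> (j < 4)%nat -> i <> j -> apart_mod_2PI (t i) (t j) (a i)) ->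
  False.
Proof.
  intros Hsum Hnear Hapart.
  destruct (Hnear 0%nat ltac:(lia)) as [k0 H0], (Hnear 1%nat ltac:(lia)) as [k1 H1],
    (Hnear 2%nat ltac:(lia)) as [k2 H2], (Hnear 3%nat ltac:(lia)) as [k3 H3]; simpl in *.
  pose proof PI_RGT_0.
  (* The four steps total less than [2 PI], so the chain does not wind around the circle. *)
  assert (Hwind : (k0 + k1 + k2 + k3 = 0)%Z).
  { apply one_IZR_lt1; rewrite !plus_IZR.
    apply Rabs_def2 in H0, H1, H2, H3; split; apply (Rmult_lt_reg_l (2 * PI)); nra. }
  set (s i := match i with 0%nat => 0%Z | 1%nat => k0 | 2%nat => (k0 + k1)%Z
                           | _ => (k0 + k1 + k2)%Z end).
  set (x i := t i + 2 * IZR (s i) * PI).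
  assert (Hmax : forall i j, (i < 4)%nat -> (j < 4)%nat -> i <> j ->
                   Rmax (a i) (a j) < Rabs (x i - x j)).
  { intros i j Hi Hj Hij; apply Rmax_lub_lt; [|rewrite Rabs_minus_sym]; unfold x.
    - rewrite (shift_2PI _ _ (s j - s i)) by lia; apply Hapart; auto.
    - rewrite (shift_2PI _ _ (s i - s j)) by lia; apply Hapart; auto. }
  apply (no_cyclic_interval_chain (x 0%nat) (x 1%nat) (x 2%nat) (x 3%nat)
           (a 0%nat) (a 1%nat) (a 2%nat) (a 3%nat)); try (apply Hmax; lia); unfold x.
  - rewrite (shift_2PI _ _ k0) by (unfold s; lia); assumption.
  - rewrite (shift_2PI _ _ k1) by (unfold s; lia); assumption.
  - rewrite (shift_2PI _ _ k2) by (unfold s; lia); assumption.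
  - rewrite (shift_2PI _ _ k3) by (unfold s; lia); assumption.
Qed.

Lemma shadow_angle_bound (K t : R) :
  1 < t <= K -> -1 <= shadow_cos K t <= 1 /\ acos (shadow_cos K t) < PI / 2.
Proof.
  intros Ht; pose proof (shadow_cos_pos K t ltac:(lra) ltac:(lra)).
  pose proof (shadow_cos_le K t Ht).
  assert (K / (K + 1) < 1) by (apply (Rmult_lt_reg_r (K + 1)); [lra|]; field_simplify; lra).
  split; [lra|]. apply acos_lt_of_cos; [lra | pose proof PI2_Rlt_PI; lra | rewrite cos_PI2; lra].
Qed.

Lemma shadow_angle_le_PI6 (K t : R) : 7 <= t <= K -> acos (shadow_cos K t) <= PI / 6.
Proof.
  intros Ht; pose proof (shadow_angle_bound K t ltac:(lra)) as [Hs _].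
  apply acos_le_of_cos; [assumption | pose proof PI6_RLT_PI2; pose proof PI2_Rlt_PI; lra |].
  rewrite cos_PI6; apply shadow_cos_ge; assumption.
Qed.

Lemma sum4_lt_PI (a : nat -> R) :
  (forall i, (i < 4)%nat -> a i < PI / 2) ->
  (forall i j, (i < 4)%nat -> (j < 4)%nat -> i <> j -> a i <= PI / 6 \/ a j <= PI / 6) ->
  a 0%nat + a 1%nat + a 2%nat + a 3%nat < PI.
Proof.
  intros Hb Hp; pose proof PI_RGT_0.
  pose proof (Hb 0%nat ltac:(lia)); pose proof (Hb 1%nat ltac:(lia));
  pose proof (Hb 2%nat ltac:(lia)); pose proof (Hb 3%nat ltac:(lia)).
  destruct (Hp 0%nat 1%nat ltac:(lia) ltac:(lia) ltac:(lia)),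
    (Hp 0%nat 2%nat ltac:(lia) ltac:(lia) ltac:(lia)),
    (Hp 0%nat 3%nat ltac:(lia) ltac:(lia) ltac:(lia)),
    (Hp 1%nat 2%nat ltac:(lia) ltac:(lia) ltac:(lia)),
    (Hp 1%nat 3%nat ltac:(lia) ltac:(lia) ltac:(lia)),
    (Hp 2%nat 3%nat ltac:(lia) ltac:(lia) ltac:(lia)); lra.
Qed.

Lemma no_hyperbolic_wheel (c : hpoint) (K : R) (nb cr : nat -> hpoint) :
  98 <= K ->
  (forall i, (i < 4)%nat -> nb i <> c /\ hcosh c (nb i) <= K /\ K < hcosh c (cr i)) ->
  (forall i j, (i < 4)%nat -> (j < 4)%nat -> i <> j -> K < hcosh (nb i) (nb j)) ->
  (forall i, (i < 4)%nat -> hcosh (nb i) (cr i) <= K /\ hcosh (nb (S i mod 4)) (cr i) <= K) ->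
  False.
Proof.
  intros HK Hc Hnb Hcr.
  set (t i := hcosh c (nb i)); set (th i := hangle c (nb i)).
  set (a i := acos (shadow_cos K (t i))).
  assert (Ht : forall i, (i < 4)%nat -> 1 < t i <= K).
  { intros i Hi; destruct (Hc i Hi) as [Hne [HK' _]].
    split; [apply hcosh_gt1, not_eq_sym |]; assumption. }
  assert (Ha : forall i, (i < 4)%nat ->
                 cos (a i) = shadow_cos K (t i) /\ 0 <= a i <= PI /\ a i < PI / 2).
  { intros i Hi; destruct (shadow_angle_bound K (t i) (Ht i Hi)) as [Hs Hlt].
    split; [apply cos_acos, Hs | split; [apply acos_bound | exact Hlt]]. }
  assert (Hnear : forall i q, (i < 4)%nat -> K < hcosh c q -> hcosh (nb i) q <= K ->
                   near_mod_2PI (th i) (hangle c q) (a i)).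
  { intros i q Hi Hq Hiq; destruct (Ha i Hi) as [Hcos [Hbound _]].
    apply near_mod_2PI_of_cos; try apply polar_angle_bound; [assumption|].
    rewrite Hcos; apply cos_angle_gt_of_near; try lra; apply Hc, Hi. }
  apply (no_cyclic_arc_chain th a).
  - apply sum4_lt_PI; [intros i Hi; apply Ha, Hi|].
    intros i j Hi Hj Hij.
    destruct (Rlt_le_dec (t i) 7) as [Hti | Hti]; [destruct (Rlt_le_dec (t j) 7) as [Htj | Htj]|].
    + exfalso; pose proof (hcosh_lt_98 c (nb i) (nb j) Hti Htj).
      pose proof (Hnb i j Hi Hj Hij); lra.
    + right; apply shadow_angle_le_PI6; split; [|apply Ht]; assumption.
    + left; apply shadow_angle_le_PI6; split; [|apply Ht]; assumption.
  - intros i Hi.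
    assert (Hi' : (S i mod 4 < 4)%nat) by (apply Nat.mod_upper_bound; lia).
    destruct (Hc i Hi) as [_ [_ Hq]], (Hcr i Hi) as [Hq1 Hq2].
    apply (near_mod_2PI_trans _ (hangle c (cr i))); [|apply near_mod_2PI_sym];
      apply Hnear; assumption.
  - intros i j Hi Hj Hij.
    apply apart_mod_2PI_of_cos; [apply Ha, Hi|].
    destruct (Ha i Hi) as [-> _].
    destruct (Hc i Hi) as [Hi1 [Hi2 _]], (Hc j Hj) as [Hj1 [Hj2 _]].
    apply cos_angle_lt_of_far; try assumption; try lra; apply Hnb; assumption.
Qed.

Lemma mod3_lt (k a : nat) : (3 <= k)%nat -> (a mod 3 < k)%nat.
Proof. intros; pose proof (Nat.mod_upper_bound a 3); lia. Qed.

Definition grid_pt (k : nat) (Hk : (3 <= k)%nat) (a b : nat) : grid_vertex k :=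
  exist _ (a mod 3, b mod 3) (conj (mod3_lt k a Hk) (mod3_lt k b Hk)).

Definition grid_ring (k : nat) (Hk : (3 <= k)%nat) (i : nat) : grid_vertex k :=
  match i with
  | 0 => grid_pt k Hk 2 1 | 1 => grid_pt k Hk 1 2 | 2 => grid_pt k Hk 0 1 | _ => grid_pt k Hk 1 0
  end%nat.

Definition grid_corner (k : nat) (Hk : (3 <= k)%nat) (i : nat) : grid_vertex k :=
  match i with
  | 0 => grid_pt k Hk 2 2 | 1 => grid_pt k Hk 0 2 | 2 => grid_pt k Hk 0 0 | _ => grid_pt k Hk 2 0
  end%nat.

Lemma grid_not_HUDG_large_radius (k : nat) (rho : R) :
  (3 <= k)%nat -> 0 <= rho -> 98 <= cosh (2 * rho) -> ~ HUDG rho (grid_vertex k) (grid_adj k).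
Proof.
  intros Hk Hrho HK Hgrid.
  apply HUDG_iff_hcosh in Hgrid as [f [Hinj Hadj]]; [|lra].
  set (K := cosh (2 * rho)) in *.
  assert (Hle : forall u v, u <> v -> grid_adj k u v -> hcosh (f u) (f v) <= K)
    by (intros; apply Hadj; assumption).
  assert (Hgt : forall u v, u <> v -> ~ grid_adj k u v -> K < hcosh (f u) (f v))
    by (intros u v Huv Hn; apply Rnot_le_lt; rewrite <- Hadj; assumption).
  apply (no_hyperbolic_wheel (f (grid_pt k Hk 1 1)) K
           (fun i => f (grid_ring k Hk i)) (fun i => f (grid_corner k Hk i)));
    [assumption | intros i Hi | intros i j Hi Hj Hij | intros i Hi];
    destruct i as [|[|[|[|i]]]]; try lia; try (destruct j as [|[|[|[|j]]]]; try lia);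
    repeat split;
    first [ intro E; apply Hinj in E; injection E; simpl; lia
          | apply Hle; [intro E; injection E; simpl; lia | unfold grid_adj; simpl; lia]
          | apply Hgt; [intro E; injection E; simpl; lia | unfold grid_adj; simpl; lia] ].
Qed.

(** * Placements *)

Lemma lattice_adj_iff (a b c d : nat) : (a, b) <> (c, d) ->
  ((a = c /\ (b = S d \/ d = S b)) \/ (b = d /\ (a = S c \/ c = S a))) <->
  ((Z.of_nat a - Z.of_nat c) ^ 2 + (Z.of_nat b - Z.of_nat d) ^ 2 <= 1)%Z.
Proof.
  intros Hne; split.
  - intros [[-> [-> | ->]] | [-> [-> | ->]]]; lia.
  - intros H.
    assert (-1 <= Z.of_nat a - Z.of_nat c <= 1)%Z by nia.
    assert (-1 <= Z.of_nat b - Z.of_nat d <= 1)%Z by nia.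
    destruct (Nat.eq_dec a c) as [-> | ], (Nat.eq_dec b d) as [-> | ]; [contradiction | nia..].
Qed.

Lemma grid_adj_iff_sqdist (a b c d : nat) (B : R) : (a, b) <> (c, d) -> 1 <= B < 2 ->
  ((a = c /\ (b = S d \/ d = S b)) \/ (b = d /\ (a = S c \/ c = S a))) <->
  (INR a - INR c) ^ 2 + (INR b - INR d) ^ 2 <= B.
Proof.
  intros Hne HB; rewrite lattice_adj_iff by assumption.
  rewrite !INR_IZR_INZ, <- !minus_IZR, !pow_IZR, <- plus_IZR; simpl Z.of_nat.
  set (m := ((Z.of_nat a - Z.of_nat c) ^ 2 + (Z.of_nat b - Z.of_nat d) ^ 2)%Z).
  split; intro H.
  - apply IZR_le in H; lra.
  - enough (m < 2)%Z by lia. apply lt_IZR; lra.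
Qed.

Lemma grid_HUDG_small_radius (k : nat) (rho : R) :
  0 < rho -> 16 * INR k * sinh rho <= 1 -> HUDG rho (grid_vertex k) (grid_adj k).
Proof.
  intros Hrho Hsmall; apply HUDG_iff_hcosh; [lra|].
  set (s := 2 * sinh rho).
  assert (Hs : 0 < s) by (pose proof (sinh_pos rho Hrho); unfold s; lra).
  assert (HK : cosh (2 * rho) = 1 + s ^ 2 / 2) by (rewrite cosh_2a_sinh; unfold s; field).
  assert (Hy : forall b, (b < k)%nat -> 1 <= 1 + INR b * s <= 9/8).
  { intros b Hb; pose proof (pos_INR b).
    assert (INR b <= INR k) by (apply le_INR; lia).
    assert (INR k * s <= 1/8) by (unfold s; lra). split; nra. }
  exists (fun u => hpt (INR (fst (proj1_sig u)) * s) (1 + INR (snd (proj1_sig u)) * s)).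
  split.
  - intros [[a b] [Ha Hb]] [[c d] [Hc Hd]] E; cbn [proj1_sig fst snd] in *.
    apply hpt_inj in E as [E1 E2]; try apply Hy; try assumption.
    apply subset_eq_compat.
    assert (Ea : INR a = INR c) by nra; assert (Eb : INR b = INR d) by nra.
    apply INR_eq in Ea, Eb; subst; reflexivity.
  - intros [[a b] [Ha Hb]] [[c d] [Hc Hd]] Huv; cbn [proj1_sig fst snd] in *.
    assert (Hne : (a, b) <> (c, d)) by (intros E; apply Huv, subset_eq_compat, E).
    unfold grid_adj; cbn [proj1_sig].
    destruct (Hy b Hb) as [Hb1 Hb2], (Hy d Hd) as [Hd1 Hd2].
    rewrite HK, hcosh_hpt by lra.
    (* The placement turns adjacency into [m <= y y'], and the heights keep [y y'] in [[1, 2)]. *)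
    rewrite (grid_adj_iff_sqdist a b c d ((1 + INR b * s) * (1 + INR d * s))) by (auto; split; nra).
    set (m := (INR a - INR c) ^ 2 + (INR b - INR d) ^ 2).
    replace ((INR a * s - INR c * s) ^ 2 + (1 + INR b * s - (1 + INR d * s)) ^ 2) with (s ^ 2 * m)
      by (unfold m; ring).
    set (y := 1 + INR b * s) in *; set (y' := 1 + INR d * s) in *.
    assert (Hs2 : 0 < s ^ 2) by (apply pow_lt; lra).
    split; intro Hm.
    + apply Rplus_le_compat_l, (div_le_iff (s ^ 2 * m) (s ^ 2 / 2) (2 * y * y')); [nra|].
      replace (s ^ 2 / 2 * (2 * y * y')) with (s ^ 2 * (y * y')) by field.
      apply Rmult_le_compat_l; lra.
    + apply Rplus_le_reg_l, (div_le_iff (s ^ 2 * m) (s ^ 2 / 2) (2 * y * y')) in Hm; [|nra].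
      replace (s ^ 2 / 2 * (2 * y * y')) with (s ^ 2 * (y * y')) in Hm by field.
      apply Rmult_le_reg_l in Hm; assumption.
Qed.

Lemma hcosh_apex_le (x K : R) : 1 <= K -> x ^ 2 <= K ^ 2 - 1 -> hcosh (hpt 0 K) (hpt x 1) <= K.
Proof.
  intros HK Hx; rewrite hcosh_hpt by lra.
  enough (((0 - x) ^ 2 + (K - 1) ^ 2) / (2 * K * 1) <= K - 1) by lra.
  apply div_le_iff; [lra | nra].
Qed.

Lemma sq_INR_diff_ge1 (i j : nat) : i <> j -> 1 <= (INR i - INR j) ^ 2.
Proof.
  intros Hij; assert (H : (S i <= j \/ S j <= i)%nat) by lia.
  destruct H as [H | H]; apply le_INR in H; rewrite S_INR in H; nra.
Qed.

Lemma star_HUDG_large_radius (n : nat) (rho : R) :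
  0 < rho -> INR n - 2 <= 2 * sinh rho -> HUDG rho (star_vertex n) (star_adj n).
Proof.
  intros Hrho Hn; apply HUDG_iff_hcosh; [lra|].
  set (K := cosh (2 * rho)).
  pose proof (sinh_pos rho Hrho) as Hsh; pose proof (cosh_sq_sub_sinh_sq rho) as Hch.
  assert (HK : K = 1 + 2 * sinh rho ^ 2) by apply cosh_2a_sinh.
  assert (Hch0 : 0 < cosh rho)
    by (unfold cosh; pose proof (exp_pos rho); pose proof (exp_pos (- rho)); lra).
  set (leaf i := hpt ((2 * INR i - INR n) * cosh rho) 1).
  assert (Hleaf : forall j, (1 <= j < n)%nat -> hcosh (hpt 0 K) (leaf j) <= K).
  { intros j Hj; apply hcosh_apex_le; [nra|].
    assert (1 <= INR j) by (apply (le_INR 1); lia).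
    assert (INR j + 1 <= INR n) by (rewrite <- S_INR; apply le_INR; lia).
    replace (K ^ 2 - 1) with ((2 * sinh rho) ^ 2 * cosh rho ^ 2) by (rewrite HK; nra).
    rewrite Rpow_mult_distr; apply Rmult_le_compat_r; [apply pow2_ge_0|].
    apply pow_maj_Rabs, Rabs_le; lra. }
  exists (fun u => if Nat.eqb (proj1_sig u) 0 then hpt 0 K else leaf (proj1_sig u)).
  split.
  - intros [i Hi] [j Hj]; cbn [proj1_sig]; intros E; apply subset_eq_compat.
    destruct (Nat.eqb_spec i 0), (Nat.eqb_spec j 0); try lia;
      apply hpt_inj in E as [Ex Ey]; try nra.
    apply INR_eq; apply Rmult_eq_reg_r in Ex; lra.
  - intros [i Hi] [j Hj] Hij; cbn [proj1_sig].
    assert (Hij' : i <> j) by (intros ->; apply Hij, subset_eq_compat; reflexivity).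
    unfold star_adj; cbn [proj1_sig].
    destruct (Nat.eqb_spec i 0), (Nat.eqb_spec j 0); try lia.
    + split; [intros _; apply Hleaf; lia | intros _; lia].
    + split; [intros _; rewrite hcosh_sym; apply Hleaf; lia | intros _; lia].
    + split; [lia | intros Hle; exfalso].
      unfold leaf in Hle; rewrite hcosh_hpt in Hle by lra.
      pose proof (sq_INR_diff_ge1 i j Hij').
      replace (((2 * INR i - INR n) * cosh rho - (2 * INR j - INR n) * cosh rho) ^ 2 + (1 - 1) ^ 2)
        with (4 * (INR i - INR j) ^ 2 * cosh rho ^ 2) in Hle by ring.
      nra.
Qed.

Lemma grid_vertex_1_trivial (u v : grid_vertex 1) : u = v.
Proof.
  destruct u as [[a b] [Ha Hb]], v as [[c d] [Hc Hd]]; simpl in *.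
  apply subset_eq_compat; f_equal; lia.
Qed.

Lemma star_vertex_1_trivial (u v : star_vertex 1) : u = v.
Proof. destruct u as [i Hi], v as [j Hj]; apply subset_eq_compat; lia. Qed.

Lemma inv_cube_bounds (m : nat) (B : R) :
  1 <= B -> B <= INR m -> 0 < 1 / INR m ^ 3 <= 1 / B ^ 3.
Proof.
  intros HB Hm; assert (0 < B ^ 3) by (apply pow_lt; lra).
  assert (B ^ 3 <= INR m ^ 3) by (apply pow_incr; lra).
  split; [apply Rdiv_lt_0_compat; lra|].
  apply Rmult_le_compat_l; [lra | apply Rinv_le_contravar; lra].
Qed.

Lemma grid_inv_cube_radius (k : nat) :
  (2 <= k)%nat -> 0 < 1 / INR (k * k) ^ 3 /\ 16 * INR k * sinh (1 / INR (k * k) ^ 3) <= 1.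
Proof.
  intros Hk; set (K := INR k).
  assert (HK : 2 <= K) by (replace 2 with (INR 2) by (simpl; lra); apply le_INR; lia).
  destruct (inv_cube_bounds (k * k) (K * K) ltac:(nra) ltac:(rewrite mult_INR; fold K; lra))
    as [H0 H1].
  set (rho := 1 / INR (k * k) ^ 3) in *.
  assert (HK5 : 2 ^ 5 <= K ^ 5) by (apply pow_incr; lra).
  assert (HK6 : 32 * K <= (K * K) ^ 3) by (replace ((K * K) ^ 3) with (K * K ^ 5) by ring; nra).
  assert (Hrho : rho * (K * K) ^ 3 <= 1).
  { apply (Rmult_le_compat_r ((K * K) ^ 3)) in H1; [|nra].
    replace (1 / (K * K) ^ 3 * (K * K) ^ 3) with 1 in H1 by (field; nra); exact H1. }
  pose proof (sinh_le_twice rho ltac:(nra)).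
  split; [assumption | nra].
Qed.

Lemma star_inv_cube_radius (n : nat) :
  (8 <= n)%nat -> 0 < 1 / INR n ^ 3 /\ cosh (2 * (1 / INR n ^ 3)) <= 11/9.
Proof.
  intros Hn.
  assert (H8 : 8 <= INR n) by (replace 8 with (INR 8) by (simpl; lra); apply le_INR; lia).
  destruct (inv_cube_bounds n 8 ltac:(lra) H8) as [H0 H1].
  set (rho := 1 / INR n ^ 3) in *.
  assert (rho <= 1/2)
    by (eapply Rle_trans; [exact H1|]; unfold Rdiv; rewrite Rmult_1_l; simpl; lra).
  split; [assumption|].
  pose proof (sinh_le_twice rho ltac:(lra)); pose proof (sinh_pos rho H0).
  rewrite cosh_2a_sinh; nra.
Qed.

Lemma grid_ln_radius (k : nat) :
  (5 <= k)%nat -> 0 <= ln (INR (k * k)) /\ 98 <= cosh (2 * ln (INR (k * k))).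
Proof.
  intros Hk; set (N := INR (k * k)).
  assert (HN : 25 <= N).
  { unfold N; rewrite mult_INR.
    assert (5 <= INR k) by (replace 5 with (INR 5) by (simpl; lra); apply le_INR; lia). nra. }
  split; [left; apply ln_pos; lra|].
  rewrite cosh_2a_sinh, sinh_ln by lra.
  assert (/ N <= 1) by (rewrite <- Rinv_1; apply Rinv_le_contravar; lra).
  nra.
Qed.

Lemma star_ln_radius (n : nat) :
  (2 <= n)%nat -> 0 < ln (INR n) /\ INR n - 2 <= 2 * sinh (ln (INR n)).
Proof.
  intros Hn.
  assert (HN : 2 <= INR n) by (replace 2 with (INR 2) by (simpl; lra); apply le_INR; lia).
  split; [apply ln_pos; lra|].
  rewrite sinh_ln by lra.
  assert (/ INR n <= 1) by (rewrite <- Rinv_1; apply Rinv_le_contravar; lra).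
  lra.
Qed.

Theorem theorem7 :
  (forall k : nat, (1 <= k)%nat ->
     HUDG (1 / INR (k * k) ^ 3) (grid_vertex k) (grid_adj k)) /\
  (forall n : nat, (8 <= n)%nat ->
     ~ HUDG (1 / INR n ^ 3) (star_vertex n) (star_adj n)) /\
  (forall k : nat, (5 <= k)%nat ->
     ~ HUDG (ln (INR (k * k))) (grid_vertex k) (grid_adj k)) /\
  (forall n : nat, (1 <= n)%nat ->
     HUDG (ln (INR n)) (star_vertex n) (star_adj n)).
Proof.
  split; [|split; [|split]].
  - intros k Hk; destruct (Nat.eq_dec k 1) as [-> | Hk2].
    + apply HUDG_subsingleton, grid_vertex_1_trivial.
    + destruct (grid_inv_cube_radius k ltac:(lia)) as [Hrho Hfit].
      apply grid_HUDG_small_radius; assumption.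
  - intros n Hn Hstar.
    destruct (star_inv_cube_radius n Hn) as [Hrho HK].
    apply star_HUDG_small_radius_le in Hstar; [lia | assumption | assumption].
  - intros k Hk.
    destruct (grid_ln_radius k Hk) as [Hrho HK].
    apply grid_not_HUDG_large_radius; [lia | assumption | assumption].
  - intros n Hn; destruct (Nat.eq_dec n 1) as [-> | Hn2].
    + apply HUDG_subsingleton, star_vertex_1_trivial.
    + destruct (star_ln_radius n ltac:(lia)) as [Hrho Hfit].
      apply star_HUDG_large_radius; assumption.
Qed.
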